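(* In any execution of Algorithm 1, no two correct processes mbrb-deliver different app-messages from a process $p_i$ with the same sequence number $sn$; i.e., if correct processes mbrb-deliver $(m,sn,i)$ and $(m',sn,i)$ respectively, then $m=m'$.
   Context: System model. There are $n$ asynchronous processes $p_1,\dots,p_n$ with distinct known identities. Up to $t$ are Byzantine (arbitrary behavior); the rest are correct; $c$ is the number of correct processes. The network is fully connected, asynchronous, never corrupts/duplicates/creates messages; ''broadcast $M$'' sends $M$ to all $n$ processes; a message adversary may suppress, per broadcast by a correct process, up to $d<c$ copies addressed to correct processes. Signatures are unforgeable (only $p_k$ can produce a valid signature by $p_k$) and public keys are known. It is assumed $n>3t+2d$. Algorithm 1 (code for $p_i$). Each process stores, for each triplet $(m,sn,j)$, a set of saved valid signatures of that triplet, at most one per signer. On $\mathrm{mbrb\_broadcast}(m,sn)$: $p_i$ saves its own signature of $(m,sn,i)$ and broadcasts $\mathrm{BUNDLE}(m,sn,i,S)$, $S$ the saved signatures for $(m,sn,i)$. On receiving $\mathrm{BUNDLE}(m,sn,j,sigs)$: if $p_i$ has not already mbrb-delivered some $(-,sn,j)$ and $sigs$ contains a valid signature of $(m,sn,j)$ by $p_j$, then: (1) save all new valid signatures of $(m,sn,j)$ in $sigs$; (2) if $p_i$ has not yet signed any $(-,sn,j)$, save its own signature of $(m,sn,j)$ and broadcast $\mathrm{BUNDLE}(m,sn,j,\text{all saved signatures for }(m,sn,j))$; (3) if strictly more than $\frac{n+t}{2}$ signatures for $(m,sn,j)$ are saved, broadcast $\mathrm{BUNDLE}(m,sn,j,\text{all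 saved signatures})$ and mbrb-deliver $(m,sn,j)$. A correct process never uses the same sequence number twice in mbrb-broadcast. *)

From mathcomp Require Import all_boot.
Set Implicit Arguments. Unset Strict Implicit. Unset Printing Implicit Defensive.

Section MBRB.
(* M : app-messages; n processes 'I_n; t : Byzantine bound used by the
   algorithm; d : message-adversary power; B : the actual set of Byzantine
   processes (correct = complement). *)
Variables (M : eqType) (n t d : nat) (B : {set 'I_n}).

Definition triplet := (M * nat * 'I_n)%type.
Definition tr_sn (x : triplet) : nat := x.1.2.
Definition tr_src (x : triplet) : 'I_n := x.2.

(* (k, x) : a signature of the triplet x by p_k (as it appears in a message;
   it may be forged, see [valid_sig]). *)
Definition signature := ('I_n * triplet)%type.

Definition bundle := (triplet * seq signature)%type.

(* network message: (sender, destination, content) *)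
Definition netmsg := ('I_n * 'I_n * bundle)%type.

Record lstate := LState {
  ls_saved : seq signature;
  ls_signed : seq triplet;
  ls_delivered : seq triplet;
  ls_used : seq nat             (* sequence numbers used in mbrb_broadcast *)
}.

Definition lstate0 := LState [::] [::] [::] [::].

Record config := Config {
  loc : 'I_n -> lstate;
  net : seq netmsg              (* messages sent but not yet received *)
}.

Definition config0 := Config (fun _ => lstate0) [::].

(* Unforgeability: a signature of x by p_k is valid iff p_k produced it:
   Byzantine processes can sign anything, a correct p_k only what it signed. *)
Definition valid_sig (C : config) (s : signature) : bool :=
  (s.1 \in B) || (s.2 \in ls_signed (loc C s.1)).

Definition saved_for (st : lstate) (x : triplet) : seq signature :=
  [seq s <- ls_saved st | s.2 == x].

Definition nsaved (st : lstate) (x : triplet) : nat :=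
  size (undup [seq s.1 | s <- saved_for st x]).

Definition delivered_sn (st : lstate) (sn : nat) (j : 'I_n) : bool :=
  has (fun y : triplet => (tr_sn y == sn) && (tr_src y == j)) (ls_delivered st).

Definition signed_sn (st : lstate) (sn : nat) (j : 'I_n) : bool :=
  has (fun y : triplet => (tr_sn y == sn) && (tr_src y == j)) (ls_signed st).

(* The message adversary may suppress at most d copies addressed to correct
   processes: D is the set of actual destinations of a broadcast. *)
Definition adv_ok (D : {set 'I_n}) : bool :=
  (B \subset D) && (#|~: D :\: B| <= d).

Definition bcast (i : 'I_n) (b : bundle) (D : {set 'I_n}) : seq netmsg :=
  [seq (i, k, b) | k <- enum D].

Definition save_own (i : 'I_n) (x : triplet) (st : lstate) : lstate :=
  LState (if (i, x) \in ls_saved st then ls_saved st else rcons (ls_saved st) (i, x))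
         (rcons (ls_signed st) x) (ls_delivered st) (ls_used st).

(* Reception of BUNDLE(x, sigs) by correct p_i in configuration C; D1, D2 are
   the destination sets of the (up to two) broadcasts of this step.
   Returns the new local state and the messages sent. *)
Definition receive (C : config) (i : 'I_n) (b : bundle) (D1 D2 : {set 'I_n})
  : lstate * seq netmsg :=
  let st := loc C i in
  let x := b.1 in
  let sigs := b.2 in
  if ~~ delivered_sn st (tr_sn x) (tr_src x)
     && ((tr_src x, x) \in sigs) && valid_sig C (tr_src x, x) then
    let new := [seq s <- undup sigs |
                 [&& s.2 == x, valid_sig C s & s \notin ls_saved st]] in
    let st1 := LState (ls_saved st ++ new) (ls_signed st)
                      (ls_delivered st) (ls_used st) in
    let (st2, out2) :=
      if ~~ signed_sn st1 (tr_sn x) (tr_src x) then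
        let st2 := save_own i x st1 in (st2, bcast i (x, saved_for st2 x) D1)
      else (st1, [::]) in
    if n + t < 2 * nsaved st2 x then
      (LState (ls_saved st2) (ls_signed st2) (rcons (ls_delivered st2) x)
              (ls_used st2),
       out2 ++ bcast i (x, saved_for st2 x) D2)
    else (st2, out2)
  else (st, [::]).

Definition upd (f : 'I_n -> lstate) (i : 'I_n) (st : lstate) : 'I_n -> lstate :=
  fun k => if k == i then st else f k.

Inductive step : config -> config -> Prop :=
| step_broadcast C i (m : M) sn D :
    i \notin B -> sn \notin ls_used (loc C i) -> adv_ok D ->
    let x : triplet := (m, sn, i) in
    let st := save_own i x (loc C i) in
    let st' := LState (ls_saved st) (ls_signed st) (ls_delivered st)
                      (rcons (ls_used st) sn) in
    step C (Config (upd (loc C) i st') (net C ++ bcast i (x, saved_for st' x) D))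
| step_receive C i src b n1 n2 D1 D2 :
    i \notin B -> net C = n1 ++ (src, i, b) :: n2 -> adv_ok D1 -> adv_ok D2 ->
    step C (Config (upd (loc C) i (receive C i b D1 D2).1)
                   (n1 ++ n2 ++ (receive C i b D1 D2).2))
| step_byz_send C k (out : seq netmsg) :
    k \in B -> all (fun msg : netmsg => msg.1.1 == k) out ->
    step C (Config (loc C) (net C ++ out))
| step_byz_receive C k src b n1 n2 :
    k \in B -> net C = n1 ++ (src, k, b) :: n2 ->
    step C (Config (loc C) (n1 ++ n2)).

Inductive reachable : config -> Prop :=
| reach_init : reachable config0
| reach_step C C' : reachable C -> step C C' -> reachable C'.

End MBRB.

(* Two correct processes that mbrb-deliver (m, sn, i) and (m', sn, i) each saw
   more than (n + t) / 2 signatures, so the two signer sets share more than t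
   processes, one of which is correct.  A correct process signs at most one
   triplet per (sn, i), and signatures by correct processes cannot be forged,
   so m = m'. *)
From mathcomp Require Import all_boot zify.
Set Implicit Arguments. Unset Strict Implicit.

Lemma quorums_meet (T : finType) (A1 A2 Bad : {set T}) (t : nat) :
  #|Bad| <= t -> #|T| + t < #|A1| + #|A2| ->
  exists2 k, k \in A1 :&: A2 & k \notin Bad.
Proof.
move=> HBad Hq.
have [Hsub|/subsetPn [k Hk HkBad]] := boolP (A1 :&: A2 \subset Bad); last by exists k.
have := subset_leq_card Hsub; have := cardsUI A1 A2; have := max_card (A1 :|: A2).
lia.
Qed.

Section Safety.
Variables (M : eqType) (n t d : nat) (B : {set 'I_n}).
Implicit Types (C : config M n) (st : lstate M n) (L : 'I_n -> lstate M n).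

Lemma nsaved_mono st st' x :
  {subset ls_saved st <= ls_saved st'} -> nsaved st x <= nsaved st' x.
Proof.
move=> Hs; apply: uniq_leq_size; first exact: undup_uniq.
move=> k; rewrite !mem_undup => /mapP [s]; rewrite mem_filter => /andP[Hx Hst ->].
by apply: map_f; rewrite mem_filter Hx Hs.
Qed.

Definition signers st x : {set 'I_n} := [set k in [seq s.1 | s <- saved_for st x]].

Lemma card_signers st x : #|signers st x| = nsaved st x.
Proof.
rewrite cardsE /nsaved -(eq_card (mem_undup _)); apply/card_uniqP/undup_uniq.
Qed.

Lemma receive_used C i b D1 D2 :
  ls_used (receive t B C i b D1 D2).1 = ls_used (loc C i).
Proof. by rewrite /receive; do ![case: ifP => _ //=]. Qed.

Lemma receive_saved_sub C i b D1 D2 :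
  {subset ls_saved (loc C i) <= ls_saved (receive t B C i b D1 D2).1}.
Proof.
move=> s Hs; rewrite /receive; do ![case: ifP => _ //=].
all: by rewrite ?mem_rcons ?inE ?mem_cat Hs ?orbT.
Qed.

Lemma receive_saved C i b D1 D2 s :
  let st' := (receive t B C i b D1 D2).1 in
  s \in ls_saved st' ->
  [|| s \in ls_saved (loc C i), valid_sig B C s | (s == (i, b.1)) && (b.1 \in ls_signed st')].
Proof.
rewrite /receive; do ![case: ifP => _ //=].
all: rewrite ?mem_rcons ?inE ?mem_cat ?mem_filter ?eqxx ?orbT ?andbT; try by move=> ->.
all: try by case/orP => [->|/andP[/and3P[_ -> _] _]]; rewrite ?orbT.
all: by case/or3P => [->|->|/andP[/and3P[_ -> _] _]]; rewrite ?orbT.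
Qed.

Lemma receive_signed C i b D1 D2 :
  let st := loc C i in let st' := (receive t B C i b D1 D2).1 in let x := b.1 in
  ls_signed st' = ls_signed st \/
  [/\ ~~ signed_sn st (tr_sn x) (tr_src x), valid_sig B C (tr_src x, x)
    & ls_signed st' = rcons (ls_signed st) x].
Proof.
rewrite /receive /=; case: ifP => [/andP[_ Hv]|_]; last by left.
by case: ifP => Hs; case: ifP => _ /=; [right|right|left|left].
Qed.

Lemma receive_delivered C i b D1 D2 y :
  let st' := (receive t B C i b D1 D2).1 in
  y \in ls_delivered st' ->
  y \in ls_delivered (loc C i) \/ y = b.1 /\ n + t < 2 * nsaved st' b.1.
Proof.
rewrite /receive; case: ifP => _ /=; last by left.
by case: ifP => _; case: ifP => Hq /=; rewrite ?mem_rcons ?inE;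
  try case/orP => [/eqP|]; by [right | left].
Qed.

Definition saved_authentic L := forall a s,
  a \notin B -> s \in ls_saved (L a) -> s.1 \notin B -> s.2 \in ls_signed (L s.1).

Definition own_signed_used L := forall k y,
  k \notin B -> y \in ls_signed (L k) -> tr_src y = k -> tr_sn y \in ls_used (L k).

Definition signed_unique L := forall k x y,
  k \notin B -> x \in ls_signed (L k) -> y \in ls_signed (L k) ->
  tr_sn x = tr_sn y -> tr_src x = tr_src y -> x = y.

Definition delivered_quorum L := forall a x,
  a \notin B -> x \in ls_delivered (L a) -> n + t < 2 * nsaved (L a) x.

Definition invariant L :=
  [/\ saved_authentic L, own_signed_used L, signed_unique L & delivered_quorum L].

Record local_update L i st' : Prop := LocalUpdate {
  update_saved_sub : {subset ls_saved (L i) <= ls_saved st'};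
  update_saved_new : forall s, s \in ls_saved st' -> s.1 \notin B ->
    [|| s \in ls_saved (L i), s.2 \in ls_signed (L s.1)
      | (s.1 == i) && (s.2 \in ls_signed st')];
  update_signed : ls_signed st' = ls_signed (L i) \/
    exists x, [/\ ~~ signed_sn (L i) (tr_sn x) (tr_src x),
                  tr_src x = i -> tr_sn x \in ls_used st'
                & ls_signed st' = rcons (ls_signed (L i)) x];
  update_used_sub : {subset ls_used (L i) <= ls_used st'};
  update_delivered : forall y, y \in ls_delivered st' ->
    y \in ls_delivered (L i) \/ n + t < 2 * nsaved st' y
}.

Lemma signed_sn_mem st y : y \in ls_signed st -> signed_sn st (tr_sn y) (tr_src y).
Proof. by move=> Hy; apply/hasP; exists y; rewrite ?eqxx. Qed.

Section LocalUpdate.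
Variables (L : 'I_n -> lstate M n) (i : 'I_n) (st' : lstate M n).
Hypotheses (Hi : i \notin B) (Hup : local_update L i st').
Let L' := upd L i st'.

Lemma upd_same : L' i = st'.
Proof. by rewrite /L' /upd eqxx. Qed.

Lemma upd_other k : k != i -> L' k = L k.
Proof. by rewrite /L' /upd => /negbTE ->. Qed.

Lemma signed_sub_upd k : {subset ls_signed (L k) <= ls_signed (L' k)}.
Proof.
have [->|Hk] := eqVneq k i; last by rewrite upd_other.
rewrite upd_same; case: (update_signed Hup) => [->|[x [_ _ ->]]] // y Hy.
by rewrite mem_rcons inE Hy orbT.
Qed.

Lemma saved_authentic_upd : saved_authentic L -> saved_authentic L'.
Proof.
move=> HA a s Ha; have [->|Hai] := eqVneq a i; last first.
  by rewrite upd_other // => Hs Hs1; apply/signed_sub_upd; exact: HA Hs Hs1.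
rewrite upd_same => Hs Hs1.
case/or3P: (update_saved_new Hup Hs Hs1) => [Hold|Hsig|/andP[/eqP-> Hsig]].
- by apply/signed_sub_upd; exact: HA Hold Hs1.
- exact/signed_sub_upd.
- by rewrite upd_same.
Qed.

Lemma own_signed_used_upd : own_signed_used L -> own_signed_used L'.
Proof.
move=> HU k y Hk; have [->|Hki] := eqVneq k i; last by rewrite !upd_other //; exact: HU.
rewrite !upd_same; case: (update_signed Hup) => [->|[x [_ Hx ->]]] => [Hy Hsrc|].
  by apply/(update_used_sub Hup); exact: HU.
rewrite mem_rcons inE => /orP[/eqP->|Hy] Hsrc; first exact: Hx.
by apply/(update_used_sub Hup); exact: HU.
Qed.

Lemma signed_unique_upd : signed_unique L -> signed_unique L'.
Proof.
move=> HU k x y Hk; have [->|Hki] := eqVneq k i; last by rewrite !upd_other //; exact: HU.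
rewrite !upd_same; case: (update_signed Hup) => [->|[z [Hz _ ->]]]; first exact: HU.
rewrite !mem_rcons !inE => /orP[/eqP->|Hx] /orP[/eqP->|Hy] // Esn Esrc.
- by move: Hz; rewrite Esn Esrc signed_sn_mem.
- by move: Hz; rewrite -Esn -Esrc signed_sn_mem.
- exact: HU Hx Hy Esn Esrc.
Qed.

Lemma delivered_quorum_upd : delivered_quorum L -> delivered_quorum L'.
Proof.
move=> HQ a x Ha; have [->|Hai] := eqVneq a i; last by rewrite !upd_other //; exact: HQ.
rewrite !upd_same => /(update_delivered Hup) [Hx|//].
apply: leq_trans (HQ _ _ Hi Hx) _; rewrite leq_mul2l nsaved_mono ?orbT //.
exact: update_saved_sub Hup.
Qed.

Lemma invariant_upd : invariant L -> invariant L'.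
Proof.
case=> *; split; [exact: saved_authentic_upd | exact: own_signed_used_upd
                  | exact: signed_unique_upd | exact: delivered_quorum_upd].
Qed.

End LocalUpdate.

Lemma local_update_broadcast L i (m : M) sn :
  own_signed_used L -> i \notin B -> sn \notin ls_used (L i) ->
  let st := save_own i (m, sn, i) (L i) in
  local_update L i
    (LState (ls_saved st) (ls_signed st) (ls_delivered st) (rcons (ls_used st) sn)).
Proof.
move=> HU Hi Hsn /=; split => /=.
- by move=> s Hs; case: ifP => // _; rewrite mem_rcons inE Hs orbT.
- move=> s; case: ifP => [_ -> //|_]; rewrite mem_rcons inE => /orP[/eqP-> _|-> //].
  by rewrite eqxx mem_rcons inE eqxx !orbT.
- right; exists (m, sn, i); split; rewrite ?mem_rcons ?inE ?eqxx //.
  apply/hasP => -[y Hy /andP[/eqP Esn /eqP Esrc]].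
  by case/negP: Hsn; rewrite -[sn]/(tr_sn (m, sn, i)) -Esn; apply: HU Hi Hy Esrc.
- by move=> z Hz; rewrite mem_rcons inE Hz orbT.
- by move=> y ->; left.
Qed.

Lemma local_update_receive C i b D1 D2 :
  i \notin B -> local_update (loc C) i (receive t B C i b D1 D2).1.
Proof.
move=> Hi; split.
- exact: receive_saved_sub.
- move=> s /receive_saved /or3P [-> //|Hv|/andP[/eqP-> Hx]] Hs1.
    by move: Hv; rewrite /valid_sig (negbTE Hs1) /= => ->; rewrite orbT.
  by rewrite eqxx Hx !orbT.
- case: (receive_signed C i b D1 D2) => [->|[Hns Hv ->]]; [by left | right].
  exists b.1; split=> // Hsrc.
  move: Hv; rewrite /valid_sig /= Hsrc (negbTE Hi) /= => /signed_sn_mem.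
  by rewrite (negbTE Hns).
- by rewrite receive_used.
- by move=> y /receive_delivered [Hy|[-> Hq]]; [left | right].
Qed.

Lemma invariant_step C C' : step t d B C C' -> invariant (loc C) -> invariant (loc C').
Proof.
case=> {C C'} [C i m sn D Hi Hsn _ x st st' | C i src b n1 n2 D1 D2 Hi _ _ _ | // | //] HI.
- have [_ HU _ _] := HI.
  exact: invariant_upd Hi (local_update_broadcast m HU Hi Hsn) HI.
- exact: invariant_upd Hi (local_update_receive _ _ _ _ Hi) HI.
Qed.

Lemma invariant_reachable C : reachable t d B C -> invariant (loc C).
Proof.
elim=> [|C0 C1 _ HI Hs]; last exact: invariant_step Hs HI.
by split.
Qed.

Lemma signer_signed L a k x :
  saved_authentic L -> a \notin B -> k \notin B ->
  k \in signers (L a) x -> x \in ls_signed (L k).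
Proof.
move=> HA Ha Hk; rewrite inE => /mapP [s]; rewrite mem_filter => /andP[/eqP <- Hs] Ek.
by rewrite Ek; apply: HA Ha Hs _; rewrite -Ek.
Qed.

End Safety.

Theorem mainTheorem4 (M : eqType) (n t d : nat) (B : {set 'I_n})
  (HB : #|B| <= t) (Hd : d < n - #|B|) (Hn : 3 * t + 2 * d < n)
  (C : config M n) :
  reachable t d B C ->
  forall (a b i : 'I_n) (sn : nat) (m m' : M),
    a \notin B -> b \notin B ->
    (m, sn, i) \in ls_delivered (loc C a) ->
    (m', sn, i) \in ls_delivered (loc C b) ->
    m = m'.
Proof.
move=> /invariant_reachable [HA _ HU HQ] a b i sn m m' Ha Hb Da Db.
have [k] : exists2 k, k \in signers (loc C a) (m, sn, i) :&: signers (loc C b) (m', sn, i)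
                    & k \notin B.
  apply: quorums_meet HB _; rewrite card_ord !card_signers.
  by have := HQ _ _ Ha Da; have := HQ _ _ Hb Db; lia.
rewrite inE => /andP[Ka Kb] Hk.
by case: (HU _ _ _ Hk (signer_signed HA Ha Hk Ka) (signer_signed HA Hb Hk Kb) erefl erefl).
Qed.
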